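(* There are absolute constants such that for every $m,\lambda\ge 1$ there exist a directed graph $G$ with $O(m)$ edges and non-negative edge weights, and a number $d$, such that every collection of subgraphs $G'_1,\dots,G'_z\subseteq G$ that are all $d\lambda$-clustered and that together cover all $d$-paths in $G$ must have total size $\sum_{i=1}^{z}|E(G'_i)|=\Omega\!\left(m\sqrt{m/\lambda}\right)$.
   Context: The length of a path is the sum of its edge weights. A $d$-path is a directed path of length at most $d$. A subgraph $H\subseteq G$ covers a path $p$ if every edge of $p$ belongs to $E(H)$; a collection of subgraphs covers all $d$-paths if every $d$-path of $G$ is covered by at least one subgraph in the collection. A directed graph $H$ is $D$-clustered if every strongly connected component $C$ of $H$ has diameter at most $D$, where the diameter of $C$ is $\max_{x,y\in C}\mathrm{dist}_{H[C]}(x,y)$. *)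

From HB Require Import structures.
From mathcomp Require Import all_boot all_order all_algebra.
From mathcomp Require Export reals.
Set Implicit Arguments. Unset Strict Implicit. Unset Printing Implicit Defensive.
Import Order.TTheory GRing.Theory Num.Theory.
Local Open Scope ring_scope.

Record wdigraph (R : numDomainType) := WDigraph {
  vert : finType;
  edge : finType;
  src : edge -> vert;
  dst : edge -> vert;
  wt : edge -> R }.

Section Paths.
Variables (R : numDomainType) (G : wdigraph R).

Fixpoint walk_from (x : vert G) (p : seq (edge G)) : bool :=
  if p is e :: p' then (src e == x) && walk_from (dst e) p' else true.

Definition pverts (x : vert G) (p : seq (edge G)) : seq (vert G) :=
  x :: map (@dst R G) p.

Definition is_dpath (x : vert G) (p : seq (edge G)) : bool :=
  walk_from x p && uniq (pverts x p).

Definition pend (x : vert G) (p : seq (edge G)) : vert G :=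
  last x (map (@dst R G) p).

Definition plen (p : seq (edge G)) : R := \sum_(e <- p) wt e.

Definition reach (H : {set edge G}) (x y : vert G) : Prop :=
  exists p, [/\ is_dpath x p, pend x p = y & all (fun e => e \in H) p].

Definition same_scc (H : {set edge G}) (x y : vert G) : Prop :=
  reach H x y /\ reach H y x.

(* H is D-clustered: for every SCC C of H and x, y in C,
   dist_{H[C]}(x, y) <= D, i.e. some path from x to y inside H[C]
   (edges of H with both endpoints in C) has length <= D. *)
Definition clustered (H : {set edge G}) (D : R) : Prop :=
  forall x y, same_scc H x y ->
  exists p, [/\ is_dpath x p, pend x p = y,
     all (fun e => e \in H) p,
     (forall e, e \in p -> same_scc H x (src e) /\ same_scc H x (dst e))
     & plen p <= D].

Definition covers_dpaths (z : nat) (Hs : 'I_z -> {set edge G}) (d : R) : Prop :=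
  forall x p, is_dpath x p -> plen p <= d ->
  exists i : 'I_z, all (fun e => e \in Hs i) p.

End Paths.

From mathcomp Require Import all_boot all_order all_algebra.
From mathcomp Require Import reals zify lra.
Import Order.TTheory GRing.Theory Num.Theory.
Set Implicit Arguments. Unset Strict Implicit. Unset Printing Implicit Defensive.

(* Take r+1 layers, each a directed cycle of n+2 edges of weight 1, and join
   consecutive layers through a hub with weight-0 edges: every vertex of layer l
   points to hub l, which points to every vertex of layer l+1.  Picking one cycle
   edge in each layer and linking the picks through the hubs gives a path of
   length d = r+1.  A (d lam)-clustered subgraph with d lam < n+1 cannot contain a
   whole layer cycle, whose diameter is n+1, so it misses a cycle edge in every
   layer.  If a cycle edge lay in at most r of the covering subgraphs, routing a
   transversal path through that edge and, in the other layers, through edges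
   missed by those subgraphs would leave it uncovered.  So every cycle edge is
   covered r+1 times, for a total of (r+1)^2 (n+2); taking r+1 ~ sqrt(m/lam) and
   n+2 ~ m/(r+1) keeps the graph at O(m) edges and gives Omega(m sqrt(m/lam)). *)

Section Walks.
Variables (R : numDomainType) (G : wdigraph R).
Implicit Types (x : vert G) (p : seq (edge G)).

Lemma plen_cons e p : plen (e :: p) = (wt e + plen p)%R.
Proof. by rewrite /plen big_cons. Qed.

Lemma walk_from_cons x e p : walk_from x (e :: p) = (src e == x) && walk_from (dst e) p.
Proof. by []. Qed.

Lemma pverts_cons x e p : pverts x (e :: p) = x :: pverts (dst e) p.
Proof. by []. Qed.

Lemma pend_cons x e p : pend x (e :: p) = pend (dst e) p.
Proof. by []. Qed.

Lemma chain_walk (g : nat -> vert G) (c : nat -> edge G) a k :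
    (forall i, a <= i < a + k -> src (c i) = g i /\ dst (c i) = g i.+1) ->
  let p := [seq c i | i <- iota a k] in
  [/\ walk_from (g a) p, pverts (g a) p = [seq g i | i <- iota a k.+1]
    & pend (g a) p = g (a + k)].
Proof.
elim: k a => [|k IHk] a chain_c /=; first by rewrite addn0.
have [src_a dst_a] : src (c a) = g a /\ dst (c a) = g a.+1 by apply: chain_c; lia.
have [|walk_p verts_p end_p] := IHk a.+1; first by move=> i ?; apply: chain_c; lia.
rewrite src_a eqxx dst_a walk_p; split=> //.
  by rewrite /pverts /= dst_a; congr (_ :: _); exact: verts_p.
by rewrite pend_cons dst_a end_p addSnnS.
Qed.

Lemma walk_potential (phi : vert G -> R) x p : walk_from x p ->
  {in p, forall e, phi (dst e) <= phi (src e) + wt e}%R ->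
  (phi (pend x p) <= phi x + plen p)%R.
Proof.
elim: p x => [|e p IHp] x /=; first by rewrite /plen big_nil addr0.
case/andP=> /eqP <- walk_p phiP.
have phi_e := phiP e (mem_head e p).
have := IHp _ walk_p (fun e' pe' => phiP e' (mem_behead (s := e :: p) pe')).
by rewrite pend_cons plen_cons addrA => /le_trans; apply; rewrite lerD2r.
Qed.

Section Rank.
Variable f : vert G -> nat.
Hypothesis f_mono : forall e, f (src e) <= f (dst e).

Lemma walk_rank_ge x p : walk_from x p -> {in pverts x p, forall v, f x <= f v}.
Proof.
elim: p x => [|e p IHp] x /=; first by move=> _ v; rewrite inE => /eqP ->.
case/andP=> /eqP <- /IHp f_p v; rewrite inE => /predU1P[-> //|/mapP[e' pe' ->]].
exact: leq_trans (f_mono e) (f_p _ (map_f _ pe')).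
Qed.

Lemma walk_rank_pend x p : walk_from x p -> f x <= f (pend x p).
Proof. by move=> /walk_rank_ge; apply; exact: mem_last. Qed.

Lemma walk_rank_flat x p : walk_from x p -> f (pend x p) <= f x ->
  {in p, forall e, f (src e) = f x /\ f (dst e) = f x}.
Proof.
elim: p x => [|e p IHp] x //=.
case/andP=> /eqP <- walk_p; rewrite pend_cons => le_end.
have le_e := f_mono e; have le_p := walk_rank_pend walk_p.
have eq_e : f (dst e) = f (src e) by apply/eqP; rewrite eqn_leq le_e (leq_trans le_p).
move=> e'; rewrite inE => /predU1P[-> //|pe'].
by rewrite -eq_e; apply: IHp; rewrite // eq_e.
Qed.

End Rank.
End Walks.

Section Counting.

Lemma mul_card_leq_sum_card (T : finType) z (Hs : 'I_z -> {set T}) (A : {set T}) k :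
  {in A, forall x, k <= #|[set i | x \in Hs i]|} -> #|A| * k <= \sum_i #|Hs i|.
Proof.
move=> multA.
have -> : \sum_i #|Hs i| = \sum_x #|[set i | x \in Hs i]|.
  under eq_bigr do rewrite -sum1_card big_mkcond /=.
  rewrite exchange_big; apply: eq_bigr => x _.
  by rewrite -sum1_card [RHS]big_mkcond; apply: eq_bigr => i _; rewrite inE.
rewrite -sum_nat_const (@leq_trans (\sum_(x in A) #|[set i | x \in Hs i]|)) //.
  by apply: (@leq_sum _ _ _ (fun=> k)); exact: multA.
by rewrite [X in X <= _]big_mkcond; apply: leq_sum => x _; case: ifP.
Qed.

Lemma transversal_cover_multiplicity (r z : nat) (C : finType)
    (F : 'I_z -> {set 'I_r.+1 * C}) (l0 : 'I_r.+1) (c0 : C) :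
  (forall i l, l != l0 -> exists c, (l, c) \notin F i) ->
  (forall J : 'I_r.+1 -> C, exists i, forall l, (l, J l) \in F i) ->
  r < #|[set i | (l0, c0) \in F i]|.
Proof.
move=> miss cover; rewrite ltnNge; apply/negP => small.
(* Send the k-th set containing (l0, c0) to layer [lift l0 k] and let J pick a
   cell it misses there. *)
set S := [set i | _] in small; pose s := enum S.
pose gap i l := odflt c0 [pick c | (l, c) \notin F i].
pose J l := if unlift l0 l is Some k then
              (if onth s k is Some i then gap i l else c0) else c0.
have [i cover_i] := cover J.
have Si : i \in s by rewrite mem_enum inE; have := cover_i l0; rewrite /J unlift_none.
have lt_ir : index i s < r by rewrite (leq_trans _ small) // cardE index_mem.
pose l := lift l0 (Ordinal lt_ir).
have : (l, J l) \in F i by apply: cover_i.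
rewrite /J liftK onthE (nth_map i) ?index_mem // nth_index // /gap.
case: pickP => [c /negPf -> //|no_gap].
have l_ne : l != l0 by rewrite eq_sym neq_lift.
by have [c] := miss i l l_ne; rewrite no_gap.
Qed.

End Counting.

Section LayeredGraph.
Variables (R : numDomainType) (r n : nat).
Local Open Scope ring_scope.

Definition cell := ('I_r.+1 * 'I_n.+2)%type.
Definition lvert := (cell + 'I_r.+1)%type.
Definition ledge := ((cell + cell) + cell)%type.

(* Cell (l, j) is vertex j of the cycle of layer l and [inr l] is the hub of
   layer l.  Each cell c owns three edges: its cycle edge, an edge up to its
   hub, and an edge from the hub of its layer down to the cell of the next layer
   in the same position; the last hub gets self-loops instead. *)
Definition lsrc (e : ledge) : lvert :=
  match e with inl (inl c) | inl (inr c) => inl c | inr (l, _) => inr l end.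

Definition ldst (e : ledge) : lvert :=
  match e with
  | inl (inl (l, j)) => inl (l, ordS j)
  | inl (inr (l, _)) => inr l
  | inr (l, j) => if (l < r)%N then inl (inord l.+1, j) else inr l
  end.

Definition lwt (e : ledge) : R := if e is inl (inl _) then 1 else 0.

Definition layered_graph : wdigraph R := WDigraph lsrc ldst lwt.
Local Notation G := layered_graph.

Definition cycle_edge (c : cell) : edge G := inl (inl c).
Definition up_edge (c : cell) : edge G := inl (inr c).
Definition down_edge (c : cell) : edge G := inr c.
Definition cell_vert (c : cell) : vert G := inl c.

Definition vrank (v : vert G) : nat :=
  match v with inl (l, _) => l.*2 | inr l => l.*2.+1 end.

Lemma vrank_mono e : (vrank (src e) <= vrank (dst e))%N.
Proof.
case: e => [[[l j]|[l j]]|[l j]] //=; case: ifP => //= lt_lr.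
by rewrite inordK ?doubleS.
Qed.

Lemma layer_walk_len_ge (l : 'I_r.+1) p : walk_from (cell_vert (l, ord0)) p ->
  pend (cell_vert (l, ord0)) p = cell_vert (l, ord_max) -> n.+1%:R <= plen p.
Proof.
move=> walk_p end_p.
(* Ranks along the walk stay at the even value of layer l, so only cycle edges
   occur, and each moves the position on the cycle up by at most its weight. *)
have := walk_rank_flat vrank_mono walk_p; rewrite end_p => /(_ (leqnn _)) flat.
pose phi (v : vert G) : R := if v is inl (_, j) then (j : nat)%:R else 0.
have := walk_potential (phi := phi) walk_p; rewrite end_p /= add0r; apply.
move=> e /flat; case: e => [[[l' j]|[l' j]]|[l' j]] /= [src_l dst_l].
- by rewrite natr1 ler_nat leq_mod.
- by move/(congr1 odd): dst_l; rewrite /= !odd_double.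
- by move/(congr1 odd): src_l; rewrite /= !odd_double.
Qed.

Lemma ordS_inord i : (i < n.+1)%N -> ordS (inord i : 'I_n.+2) = inord i.+1.
Proof. by move=> lt_in; apply: val_inj; rewrite /= !inordK ?modn_small // ltnW. Qed.

Lemma ordS_max : ordS (ord_max : 'I_n.+2) = ord0.
Proof. by apply: val_inj; rewrite /= modnn. Qed.

Lemma layer_reach_max (H : {set edge G}) (l : 'I_r.+1) :
  (forall j, cycle_edge (l, j) \in H) ->
  reach H (cell_vert (l, ord0)) (cell_vert (l, ord_max)).
Proof.
move=> layer_in; pose g i := cell_vert (l, inord i).
have [|walk_p verts_p end_p] :=
  chain_walk (g := g) (c := fun i => cycle_edge (l, inord i)) (a := 0) (k := n.+1).
  by move=> i /andP[_ lt_in]; rewrite /= ordS_inord.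
have g0 : g 0%N = cell_vert (l, ord0) by rewrite /g -(inord_val ord0).
exists [seq cycle_edge (l, inord i) | i <- iota 0 n.+1]; rewrite -g0; split.
- rewrite /is_dpath walk_p verts_p map_inj_in_uniq ?iota_uniq // => i i'.
  rewrite !mem_iota /g /cell_vert => lt_in lt_i'n -[] /(congr1 val).
  by rewrite /= !inordK.
- by rewrite end_p /g add0n -(inord_val ord_max).
- by apply/allP=> _ /mapP[i _ ->].
Qed.

Lemma layer_cycle_not_clustered (H : {set edge G}) (D : R) (l : 'I_r.+1) :
  (forall j, cycle_edge (l, j) \in H) -> D < n.+1%:R -> ~ clustered H D.
Proof.
move=> layer_in D_lt clH.
have scc : same_scc H (cell_vert (l, ord0)) (cell_vert (l, ord_max)).
  split; first exact: layer_reach_max.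
  exists [:: cycle_edge (l, ord_max)]; split; rewrite /= ?layer_in //.
    rewrite /is_dpath /= eqxx /= ordS_max inE andbT /cell_vert.
    by apply/eqP=> -[].
  by rewrite /pend /= -ordS_max.
have [p [/andP[walk_p _] end_p _ _ len_p]] := clH _ _ scc.
by have := le_lt_trans (le_trans (layer_walk_len_ge walk_p end_p) len_p) D_lt; rewrite ltxx.
Qed.

Lemma cell_vert_ordS_neq (l : 'I_r.+1) j : cell_vert (l, j) != cell_vert (l, ordS j).
Proof.
apply/eqP=> -[] /(congr1 val) /=; have := ltn_ord j.
rewrite leq_eqVlt => /predU1P[j_max | lt_j1]; last by rewrite modn_small //; lia.
by rewrite j_max modnn; lia.
Qed.

Section Transversal.
Variable J : 'I_r.+1 -> 'I_n.+2.

Definition tcell (l : nat) : cell := (inord l, J (inord l)).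

Fixpoint transversal (k l : nat) : seq (edge G) :=
  cycle_edge (tcell l) :: if k is k'.+1 then
    [:: up_edge (inord l, ordS (J (inord l))), down_edge (inord l, J (inord l.+1))
      & transversal k' l.+1]
  else [::].

Lemma down_edge_dst l : (l < r)%N ->
  dst (down_edge (inord l, J (inord l.+1))) = cell_vert (tcell l.+1).
Proof. by move=> lt_lr; rewrite /= inordK ?lt_lr // ltnW. Qed.

Lemma transversal_walk k l : (l + k <= r)%N ->
  walk_from (cell_vert (tcell l)) (transversal k l).
Proof.
elim: k l => [|k IHk] l lkr; first by rewrite /= eqxx.
rewrite [transversal _ _]/= !walk_from_cons down_edge_dst ?IHk ?eqxx //; lia.
Qed.

Lemma transversal_uniq k l : (l + k <= r)%N ->
  uniq (pverts (cell_vert (tcell l)) (transversal k l)).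
Proof.
elim: k l => [|k IHk] l lkr.
  by rewrite /= inE andbT cell_vert_ordS_neq.
rewrite [transversal _ _]/= !pverts_cons down_edge_dst; last lia.
set rest := pverts _ _.
have low v : (vrank v < l.+1.*2)%N -> v \notin rest.
  apply: contraTN => /(walk_rank_ge vrank_mono (transversal_walk _)) rest_v.
  have := rest_v ltac:(lia); rewrite /= inordK -?leqNgt //; lia.
have uniq_rest : uniq rest by apply: IHk; lia.
have lt_lr1 : (l < r.+1)%N by lia.
clearbody rest; rewrite /= !inE !negb_or uniq_rest !low /= ?inordK ?doubleS // !andbT.
exact: cell_vert_ordS_neq.
Qed.

Lemma transversal_len k l : plen (transversal k l) = k.+1%:R.
Proof.
elim: k l => [|k IHk] l; first by rewrite /plen big_seq1.
by rewrite /= !plen_cons IHk /= !add0r addrC natr1.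
Qed.

Lemma transversal_mem k l l' : (l <= l' <= l + k)%N ->
  cycle_edge (tcell l') \in transversal k l.
Proof.
elim: k l => [|k IHk] l /andP[le_ll' le_l'lk].
  by rewrite (_ : l' = l) ?mem_head //; lia.
have [->|ne_l'l] := eqVneq l' l; first exact: mem_head.
by rewrite !inE IHk ?orbT //; lia.
Qed.

Lemma transversal_dpath : is_dpath (cell_vert (tcell 0)) (transversal r 0).
Proof. by rewrite /is_dpath transversal_walk ?transversal_uniq. Qed.

End Transversal.

Lemma layered_cover_bound (D : R) z (Hs : 'I_z -> {set edge G}) :
    ((0 < r)%N -> D < n.+1%:R) ->
    (forall i, clustered (Hs i) D) -> covers_dpaths Hs r.+1%:R ->
  (r.+1 * n.+2 * r.+1 <= \sum_i #|Hs i|)%N.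
Proof.
move=> D_lt clHs covHs.
have mult c : (r < #|[set i | cycle_edge c \in Hs i]|)%N.
  case: c => l0 j0; pose F i := [set c | cycle_edge c \in Hs i].
  have -> : [set i | cycle_edge (l0, j0) \in Hs i] = [set i | (l0, j0) \in F i].
    by apply/setP=> i; rewrite !inE.
  apply: transversal_cover_multiplicity => [i l ne_l | J].
    have [c|full] := pickP (fun c => (l, c) \notin F i); first by exists c.
    have r_gt0 : (0 < r)%N.
      by case: posnP ne_l => // r0; rewrite -val_eqE /=; move: (ltn_ord l) (ltn_ord l0); lia.
    case: (layer_cycle_not_clustered (l := l) _ (D_lt r_gt0) (clHs i)) => j.
    by have := full j; rewrite inE => /negbFE.
  have [|i all_i] := covHs _ _ (transversal_dpath J); first by rewrite transversal_len.
  exists i => l; rewrite inE; apply: (allP all_i).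
  have := @transversal_mem J r 0 l; rewrite /tcell inord_val; apply.
  by rewrite add0n /= -ltnS.
have := mul_card_leq_sum_card (A := [set cycle_edge c | c in setT]) (k := r.+1) (Hs := Hs).
rewrite card_imset ?cardsT ?card_prod ?card_ord; last by move=> c c' [].
by apply=> _ /imsetP[c _ ->]; apply: mult.
Qed.

End LayeredGraph.

Section Dimensions.
Local Open Scope ring_scope.
Variables (R : realType) (m : nat) (lam : R).
Hypotheses (m_gt0 : (0 < m)%N) (lam_ge1 : 1 <= lam).
Local Notation S := (Num.sqrt (m%:R / lam)).
Local Notation r := (Num.truncn S).-1.

Lemma lam_gt0 : 0 < lam.
Proof. exact: lt_le_trans ltr01 lam_ge1. Qed.

Lemma sqrt_ratio_sq : S ^+ 2 * lam = m%:R.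
Proof. by rewrite sqr_sqrtr ?divr_ge0 ?ler0n ?(ltW lam_gt0) // mulfVK ?gt_eqF ?lam_gt0. Qed.

Lemma truncn_sqrt_ratio : (Num.truncn S)%:R <= S < (Num.truncn S).+1%:R.
Proof. exact/truncn_itv/sqrtr_ge0. Qed.

Lemma sqrt_ratio_le_layers : S <= r.+1%:R *+ 2.
Proof.
have /andP[_ S_lt] := truncn_sqrt_ratio.
rewrite mulr2n (le_trans (ltW S_lt)) // -natrD ler_nat; lia.
Qed.

Lemma layers_le_sqrt_ratio : (0 < r)%N -> r.+1%:R <= S.
Proof.
by move=> r_gt0; rewrite prednK ?(andP truncn_sqrt_ratio).1 //; lia.
Qed.

Lemma layers_le : (r.+1 <= m)%N.
Proof.
have [r0|r_gt0] := posnP r; first by rewrite r0.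
rewrite -(ler_nat R); apply: le_trans (layers_le_sqrt_ratio r_gt0) _.
have m_ge1 : 1 <= m%:R :> R by rewrite ler1n.
have S2_le : S ^+ 2 <= m%:R by rewrite -[leRHS]sqrt_ratio_sq ler_peMr ?sqr_ge0.
have := sqrtr_ge0 (m%:R / lam); nra.
Qed.

Lemma layers_lam_lt : (0 < r)%N -> r.+1%:R * lam < (m %/ r.+1).+1%:R.
Proof.
move=> r_gt0; rewrite -(ltr_pM2l (ltr0Sn R r)) mulrA -expr2.
apply: (@le_lt_trans _ _ m%:R); last by rewrite -natrM ltr_nat mulnC ltn_ceil.
rewrite -[leRHS]sqrt_ratio_sq ler_wpM2r ?(ltW lam_gt0) // ler_pXn2r ?nnegrE ?sqrtr_ge0 //.
exact: layers_le_sqrt_ratio.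
Qed.

End Dimensions.

Local Open Scope ring_scope.

Theorem theorem1p3 :
  exists (c1 : nat) (c2 : rat), (0 < c2)%R /\
  forall (R : realType) (m : nat) (lam : R), (1 <= m)%N -> 1 <= lam ->
  exists (G : wdigraph R) (d : R),
    (#|edge G| <= c1 * m)%N /\
    (forall e : edge G, 0 <= wt e) /\
    forall (z : nat) (Hs : 'I_z -> {set edge G}),
      (forall i, clustered (Hs i) (d * lam)) ->
      covers_dpaths Hs d ->
      ratr c2 * m%:R * Num.sqrt (m%:R / lam) <= (\sum_(i < z) #|Hs i|)%:R.
Proof.
exists 9%N, 2%:R^-1; split; first by rewrite invr_gt0 ltr0n.
move=> R m lam m_gt0 lam_ge1.
set S := Num.sqrt _; set r := (Num.truncn S).-1; set n := (m %/ r.+1)%N.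
have r_le_m : (r.+1 <= m)%N := layers_le m_gt0 lam_ge1.
have m_lt : (m < n.+1 * r.+1)%N := ltn_ceil m (ltn0Sn r).
exists (layered_graph R r n), r.+1%:R; split; [|split].
- rewrite /= !card_sum !card_prod !card_ord.
  rewrite (_ : r.+1 * n.+2 = n * r.+1 + 2 * r.+1)%N; last by rewrite -mulnDl addn2 mulnC.
  have := leq_divM m r.+1; rewrite -/n; lia.
- by case=> [[]|] c /=; rewrite ?ler01.
move=> z Hs clHs covHs.
have bound : (r.+1 * n.+2 * r.+1 <= \sum_i #|Hs i|)%N :=
  layered_cover_bound (layers_lam_lt m_gt0 lam_ge1) clHs covHs.
apply: le_trans (_ : _ <= (r.+1 * n.+2)%:R * r.+1%:R) _; last by rewrite -natrM ler_nat.
have S_le : S <= r.+1%:R * 2 by rewrite mulr_natr; exact: sqrt_ratio_le_layers.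
have m_le : m%:R <= (r.+1 * n.+2)%:R :> R by rewrite ler_nat; nia.
have := sqrtr_ge0 (m%:R / lam); have := ler0n R m; have := ler0n R r.+1.
rewrite fmorphV rmorph_nat; nra.
Qed.
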